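(* Let $S$ be a Polish space, $R\subseteq S\times S$ a Borel relation, and $\mu,\nu$ Borel probability measures on $S$. Set $c=1-\mathbf 1_R$. Then the supremum \[ \sup\Big\{\int_S\phi\,d\mu-\int_S\phi\,d\nu:\ \phi\in b\mathcal B(S),\ \phi(x)-\phi(y)\le c(x,y)\ \forall x,y\in S\Big\} \] is attained by some $\phi\in b\mathcal B(S)$ satisfying $\phi(x)-\phi(y)\le c(x,y)$ for all $x,y\in S$.
   Context: $b\mathcal{B}(S)$ denotes the set of all bounded Borel measurable functions $S\to\mathbb{R}$; $\mathbf 1_R$ is the indicator function of $R$. *)

From HB Require Import structures.
From mathcomp Require Import all_boot all_order all_algebra.
From mathcomp Require Import all_classical all_reals all_analysis.
Set Implicit Arguments. Unset Strict Implicit. Unset Printing Implicit Defensive.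
Import Order.TTheory GRing.Theory Num.Theory.
Local Open Scope classical_set_scope.
Local Open Scope ring_scope.

(* A Polish space, presented with a fixed complete (pseudo)metric structure:
   complete, Hausdorff (so the pseudometric is a metric) and separable
   (has a countable dense subset). *)
Definition polish_space (R : realType) (T : completePseudoMetricType R) : Prop :=
  hausdorff_space T /\ exists D : set T, countable D /\ dense D.

Definition borel_of (T : pointedType) (tT : set (set T)) :=
  g_sigma_algebraType tT.

Definition borel_set (T : topologicalType) (A : set T) : Prop :=
  <<s @open T >> A.

Definition cost (R : realType) (T : Type) (Rel : set (T * T)) (x y : T) : R :=
  1 - \1_Rel (x, y).

Definition bounded_borel (R : realType) (d : measure_display)
  (S : measurableType d) (phi : S -> R) : Prop :=
  measurable_fun setT phi /\ exists M : R, forall x, `|phi x| <= M.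

Definition dual_obj (R : realType) (d : measure_display) (S : measurableType d)
  (mu nu : probability S R) (phi : S -> R) : \bar R :=
  (\int[mu]_x (phi x)%:E - \int[nu]_x (phi x)%:E)%E.
Arguments cost {R T} Rel x y.

From HB Require Import structures.
From mathcomp Require Import all_boot all_order all_algebra.
From mathcomp Require Import all_classical all_reals all_analysis.
From mathcomp Require Import measurable_realfun lra.
Import Order.TTheory GRing.Theory Num.Theory numFieldNormedType.Exports.
Set Implicit Arguments. Unset Strict Implicit. Unset Printing Implicit Defensive.
Local Open Scope classical_set_scope.
Local Open Scope ring_scope.

(* Subtracting phi x0 from an admissible phi does not
   change the objective J and puts phi in [-1, 1], so it is enough to maximize J
   over the admissible phi with values in [-1, 1].  These form a lattice closed
   under pointwise limits, J is continuous along such limits by dominated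
   convergence, and J (f \min g) + J (f \max g) = J f + J g.  If s is the
   supremum and J phi_n > s - 2^-n, modularity gives
   J (phi_n \min ... \min phi_(n+k)) >= s - 2 * 2^-n, hence also
   J (inf_k phi_(n+k)) >= s - 2 * 2^-n; these infima increase to the liminf of
   the phi_n, which is therefore a maximizer. *)

Lemma ler_lim_seq (R : realType) (u v : R^nat) (l l' : R) :
  u @ \oo --> l -> v @ \oo --> l' -> (forall n, u n <= v n) -> l <= l'.
Proof. by move=> ul vl uv; apply: ler_cvg_to ul vl _; exact: nearW. Qed.

Lemma norm_lim_le (R : realType) (u : R^nat) (l M : R) :
  u @ \oo --> l -> (forall n, `|u n| <= M) -> `|l| <= M.
Proof. by move=> ul; apply: ler_lim_seq (cvg_norm ul) (cvg_cst M). Qed.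

Lemma min_sub_le (R : realDomainType) (a b a' b' e : R) :
  a - a' <= e -> b - b' <= e -> Num.min a b - Num.min a' b' <= e.
Proof. by rewrite !lerBlDr addr_minr; exact: le_min2. Qed.

Lemma max_sub_le (R : realDomainType) (a b a' b' e : R) :
  a - a' <= e -> b - b' <= e -> Num.max a b - Num.max a' b' <= e.
Proof. by rewrite !lerBlDr addr_maxr; exact: le_max2. Qed.

Lemma norm_min_le (R : realDomainType) (a b M : R) :
  `|a| <= M -> `|b| <= M -> `|Num.min a b| <= M.
Proof. by rewrite minEle; case: ifP. Qed.

Lemma norm_max_le (R : realDomainType) (a b M : R) :
  `|a| <= M -> `|b| <= M -> `|Num.max a b| <= M.
Proof. by rewrite maxEle; case: ifP. Qed.

Section BoundedBorelIntegral.
Context (d : measure_display) (S : measurableType d) (R : realType)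
  (P : probability S R).

Lemma bounded_borel_cst (c : R) : bounded_borel (fun _ : S => c).
Proof. by split; [exact: measurable_cst | exists `|c|]. Qed.

Lemma bounded_borel_integrable (f : S -> R) :
  bounded_borel f -> P.-integrable setT (EFin \o f).
Proof.
move=> [mf [M hM]]; apply: measurable_bounded_integrable => //.
  by rewrite (le_lt_trans (probability_le1 P measurableT)) // ltry.
exists M; split; first exact: num_real.
by move=> y My x _; rewrite /= (le_trans (hM x)) // ltW.
Qed.

Lemma integral_bounded_borel (f : S -> R) : bounded_borel f ->
  (\int[P]_x (f x)%:E = (\int[P]_x f x)%:E)%E.
Proof.
move=> bf; rewrite fineK //.
by apply: integrable_fin_num => //; exact: bounded_borel_integrable.
Qed.

Lemma Rintegral_cst_probability (c : R) : \int[P]_x c = c.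
Proof. by rewrite Rintegral_cst //= probability_setT mulr1. Qed.

Lemma norm_Rintegral_le (f : S -> R) (M : R) :
  bounded_borel f -> (forall x, `|f x| <= M) -> `|\int[P]_x f x| <= M.
Proof.
move=> bf fM; have iM := bounded_borel_integrable (bounded_borel_cst M).
have inf : P.-integrable setT (EFin \o (fun x => `|f x|)).
  apply: bounded_borel_integrable; split.
    exact: (measurableT_comp (@normr_measurable _ _) bf.1).
  by case: bf => _ [N hN]; exists N => x; rewrite normr_id.
apply: le_trans (le_normr_Rintegral _ (bounded_borel_integrable bf)) _ => //.
by rewrite -[leRHS]Rintegral_cst_probability; apply: le_Rintegral.
Qed.

Lemma cvg_Rintegral_bounded (f_ : (S -> R)^nat) (f : S -> R) (M : R) :
  (forall n, measurable_fun setT (f_ n)) -> (forall n x, `|f_ n x| <= M) ->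
  (forall x, f_ ^~ x @ \oo --> f x) ->
  (fun n => \int[P]_x f_ n x) @ \oo --> \int[P]_x f x.
Proof.
move=> mf f_M cf.
have mlim : measurable_fun setT f by apply: (measurable_fun_cvg mf).
have cfE x : (f_ n x)%:E @[n --> \oo] --> (f x)%:E.
  by apply: cvg_EFin; [exact: nearW | exact: cf].
have [_ _ cvgE] := dominated_convergence measurableT
  (fun n => (measurable_EFinP _ _).2 (mf n)) ((measurable_EFinP _ _).2 mlim)
  (aeW _ (fun x _ => cfE x))
  (bounded_borel_integrable (bounded_borel_cst M)) (aeW _ (fun x n _ => f_M n x)).
have bf : bounded_borel f.
  by split => //; exists M => x; apply: norm_lim_le (cf x) _.
by apply: fine_cvg; rewrite -integral_bounded_borel.
Qed.

End BoundedBorelIntegral.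

Section LatticeSupremum.
Context (T : Type) (R : realType) (A : set (T -> R)) (J : (T -> R) -> R) (M : R).
Hypothesis A_bounded : forall f x, A f -> `|f x| <= M.
Hypothesis A_min : forall f g, A f -> A g -> A (f \min g).
Hypothesis A_max : forall f g, A f -> A g -> A (f \max g).
Hypothesis A_cvg : forall (f_ : (T -> R)^nat) f, (forall n, A (f_ n)) ->
  (forall x, f_ ^~ x @ \oo --> f x) -> A f.
Hypothesis J_cvg : forall (f_ : (T -> R)^nat) f, (forall n, A (f_ n)) ->
  (forall x, f_ ^~ x @ \oo --> f x) -> J \o f_ @ \oo --> J f.
Hypothesis J_modular : forall f g, A f -> A g ->
  J (f \min g) + J (f \max g) = J f + J g.
Hypothesis J_ubound : has_ubound (J @` A).
Hypothesis A_nonempty : A !=set0.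

Let s := sup (J @` A).

Let has_sup_J : has_sup (J @` A).
Proof. by split => //; case: A_nonempty => f Af; exists (J f), f. Qed.

Lemma J_le_sup f : A f -> J f <= s.
Proof. by move=> Af; apply: sup_upper_bound has_sup_J _ _; exists f. Qed.

Lemma J_min_ge f g : A f -> A g -> J f + J g - s <= J (f \min g).
Proof.
move=> Af Ag; have := J_le_sup (A_max Af Ag); have := J_modular Af Ag; lra.
Qed.

Let eps n : R := 2^-1 ^+ n.

Let eps_gt0 n : 0 < eps n.
Proof. by rewrite exprn_gt0 // invr_gt0. Qed.

Let epsS n : eps n = 2 * eps n.+1.
Proof. by rewrite /eps exprS mulrA divff ?mul1r // pnatr_eq0. Qed.

Section TailMinimum.
Variable phi : nat -> T -> R.
Hypothesis phiA : forall n, A (phi n).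
Hypothesis phi_near_sup : forall n, s - eps n < J (phi n).

Fixpoint tail_min (n k : nat) : T -> R :=
  if k is k'.+1 then phi n \min tail_min n.+1 k' else phi n.

Lemma tail_min_A n k : A (tail_min n k).
Proof. by elim: k n => [|k IH] n //=; exact: A_min. Qed.

Lemma tail_min_J n k : s - 2 * eps n + eps (n + k) <= J (tail_min n k).
Proof.
elim: k n => [|k IH] n /=.
  by rewrite addn0; have := phi_near_sup n; lra.
have := J_min_ge (phiA n) (tail_min_A n.+1 k); have := IH n.+1.
have := phi_near_sup n; rewrite addSn addnS (epsS n); lra.
Qed.

Lemma tail_minS_le n k x : tail_min n k.+1 x <= tail_min n k x.
Proof.
elim: k n => [|k IH] n; first by rewrite /= ge_min lexx.
by rewrite /=; apply: le_min2 => //; exact: IH.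
Qed.

Definition tail_inf n x := inf (range (tail_min n ^~ x)).

Lemma tail_min_lbound n x : has_lbound (range (tail_min n ^~ x)).
Proof.
exists (- M) => _ [k _ <-]; rewrite lerNl.
by apply: le_trans (A_bounded x (tail_min_A n k)); rewrite -normrN ler_norm.
Qed.

Lemma cvg_tail_inf n x : tail_min n ^~ x @ \oo --> tail_inf n x.
Proof.
apply: nonincreasing_cvgn (tail_min_lbound n x).
by apply/nonincreasing_seqP => k; exact: tail_minS_le.
Qed.

Lemma tail_inf_A n : A (tail_inf n).
Proof. apply: (A_cvg (tail_min_A n)) => x; exact: cvg_tail_inf. Qed.

Lemma tail_inf_J n : s - 2 * eps n <= J (tail_inf n).
Proof.
have J_tail : J \o tail_min n @ \oo --> J (tail_inf n).
  by apply: J_cvg (tail_min_A n) _ => x; exact: cvg_tail_inf.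
apply: ler_lim_seq (cvg_cst _) J_tail _ => k.
by have := tail_min_J n k; have := eps_gt0 (n + k); rewrite /=; lra.
Qed.

Lemma tail_inf_le n x : tail_inf n x <= tail_inf n.+1 x.
Proof.
apply: lb_le_inf; first by exists (tail_min n.+1 0 x), 0%N.
move=> _ [k _ <-]; apply: (@le_trans _ _ (tail_min n k.+1 x)).
  by apply: ge_inf; [exact: tail_min_lbound | exists k.+1].
by rewrite /= ge_min lexx orbT.
Qed.

Definition liminf_phi x := sup (range (tail_inf ^~ x)).

Lemma cvg_liminf_phi x : tail_inf ^~ x @ \oo --> liminf_phi x.
Proof.
apply: nondecreasing_cvgn.
  by apply/nondecreasing_seqP => n; exact: tail_inf_le.
exists M => _ [n _ <-]; apply: le_trans (A_bounded x (tail_inf_A n)).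
exact: ler_norm.
Qed.

Lemma liminf_phi_A : A liminf_phi.
Proof. by apply: A_cvg tail_inf_A _ => x; exact: cvg_liminf_phi. Qed.

Lemma liminf_phi_J : s <= J liminf_phi.
Proof.
have eps2 : (fun n => s - 2 * eps n) @ \oo --> s.
  rewrite -[X in _ --> X]subr0; apply: cvgB; first exact: cvg_cst.
  apply: (@cvg_geometric _ 2 (2^-1)).
  by rewrite ger0_norm ?invr_ge0 // invf_lt1 // ltr1n.
have J_liminf : J \o tail_inf @ \oo --> J liminf_phi.
  by apply: J_cvg tail_inf_A _ => x; exact: cvg_liminf_phi.
exact: ler_lim_seq eps2 J_liminf tail_inf_J.
Qed.

End TailMinimum.

Theorem sup_attained : exists2 H, A H & forall f, A f -> J f <= J H.
Proof.
have /boolp.choice[phi phi_spec] : forall n, exists f, A f /\ s - eps n < J f.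
  move=> n; have [_ [f Af <-] Jf] := sup_adherent (eps_gt0 n) has_sup_J.
  by exists f.
exists (liminf_phi phi); first exact: liminf_phi_A (fun n => (phi_spec n).1).
move=> f Af; apply: le_trans (J_le_sup Af) _.
exact: liminf_phi_J (fun n => (phi_spec n).1) (fun n => (phi_spec n).2).
Qed.

End LatticeSupremum.

Section DualPotentials.
Context (d : measure_display) (S : measurableType d) (R : realType)
  (mu nu : probability S R) (c : S -> S -> R).
Hypothesis c_ge0 : forall x y, 0 <= c x y.
Hypothesis c_le1 : forall x y, c x y <= 1.

Definition c_potential (f : S -> R) :=
  bounded_borel f /\ forall x y, f x - f y <= c x y.

Definition unit_potential (f : S -> R) := c_potential f /\ forall x, `|f x| <= 1.

Let gap (f : S -> R) := \int[mu]_x f x - \int[nu]_x f x.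

Lemma unit_potential0 : unit_potential (fun=> 0).
Proof.
split; last by move=> x; rewrite normr0.
by split; [exact: bounded_borel_cst | move=> x y; rewrite subr0].
Qed.

Lemma unit_potential_min f g :
  unit_potential f -> unit_potential g -> unit_potential (f \min g).
Proof.
move=> [[[mf _] cf] f1] [[[mg _] cg] g1].
split; last by move=> x; exact: norm_min_le.
split; last by move=> x y; exact: min_sub_le.
by split; [exact: measurable_minr | exists 1 => x; exact: norm_min_le].
Qed.

Lemma unit_potential_max f g :
  unit_potential f -> unit_potential g -> unit_potential (f \max g).
Proof.
move=> [[[mf _] cf] f1] [[[mg _] cg] g1].
split; last by move=> x; exact: norm_max_le.
split; last by move=> x y; exact: max_sub_le.
by split; [exact: measurable_maxr | exists 1 => x; exact: norm_max_le].
Qed.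

Lemma unit_potential_cvg (f_ : (S -> R)^nat) f :
  (forall n, unit_potential (f_ n)) -> (forall x, f_ ^~ x @ \oo --> f x) ->
  unit_potential f.
Proof.
move=> uf cf; have f1 x : `|f x| <= 1.
  by apply: norm_lim_le (cf x) _ => n; exact: (uf n).2.
split => //; split.
  split; last by exists 1.
  apply: (measurable_fun_cvg (h := f_)) => [n|x _]; first exact: (uf n).1.1.1.
  exact: cf.
move=> x y; apply: ler_lim_seq (cvgB (cf x) (cf y)) (cvg_cst _) _ => n.
exact: (uf n).1.2.
Qed.

Lemma gap_cvg (f_ : (S -> R)^nat) f : (forall n, unit_potential (f_ n)) ->
  (forall x, f_ ^~ x @ \oo --> f x) -> gap \o f_ @ \oo --> gap f.
Proof.
move=> uf cf; have mf n := (uf n).1.1.1; have f1 n x := (uf n).2 x.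
by apply: cvgB; [exact: (cvg_Rintegral_bounded (P := mu) mf f1 cf)
                | exact: (cvg_Rintegral_bounded (P := nu) mf f1 cf)].
Qed.

Lemma gap_modular f g : unit_potential f -> unit_potential g ->
  gap (f \min g) + gap (f \max g) = gap f + gap g.
Proof.
move=> uf ug; have bf := uf.1.1; have bg := ug.1.1.
have bmin := (unit_potential_min uf ug).1.1.
have bmax := (unit_potential_max uf ug).1.1.
have split_sum (P : probability S R) :
    \int[P]_x (f \min g) x + \int[P]_x (f \max g) x =
    \int[P]_x f x + \int[P]_x g x.
  rewrite -!RintegralD //; try exact: bounded_borel_integrable.
  by congr Rintegral; apply: funext => x /=; rewrite addr_min_max.
by rewrite /gap; have := split_sum mu; have := split_sum nu; lra.
Qed.

Lemma gap_ubound : has_ubound (gap @` unit_potential).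
Proof.
exists 2 => _ [f [[bf _] f1] <-].
have := norm_Rintegral_le mu bf f1; have := norm_Rintegral_le nu bf f1.
by rewrite /gap !ler_norml => /andP[? ?] /andP[? ?]; lra.
Qed.

Lemma gap_sub_cst f a : bounded_borel f -> gap (fun x => f x - a) = gap f.
Proof.
have ba := bounded_borel_cst S a.
move=> bf; rewrite /gap !RintegralB //; try exact: bounded_borel_integrable.
by rewrite !Rintegral_cst_probability; lra.
Qed.

Lemma dual_objE f : bounded_borel f -> dual_obj mu nu f = (gap f)%:E.
Proof. by move=> bf; rewrite /dual_obj !integral_bounded_borel. Qed.

Lemma unit_potential_sub (x0 : S) f : c_potential f ->
  unit_potential (fun x => f x - f x0).
Proof.
move=> [[mf [N fN]] cf]; split; last first.
  move=> x; rewrite ler_norml.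
  by have := cf x x0; have := cf x0 x; have := c_le1 x x0; have := c_le1 x0 x; lra.
split; last by move=> x y; have := cf x y; lra.
split; first exact: measurable_funB.
exists (N + `|f x0|) => x.
by rewrite (le_trans (ler_normB _ _)) // lerD2r.
Qed.

Theorem dual_sup_attained (x0 : S) : exists phi0, c_potential phi0 /\
  forall phi, c_potential phi -> (dual_obj mu nu phi <= dual_obj mu nu phi0)%E.
Proof.
have [H uH H_max] := sup_attained (fun f x (uf : unit_potential f) => uf.2 x)
  unit_potential_min unit_potential_max unit_potential_cvg gap_cvg gap_modular
  gap_ubound (ex_intro _ _ unit_potential0).
exists H; split => [|phi cphi]; first exact: uH.1.
rewrite !dual_objE ?lee_fin; [|exact: uH.1.1|exact: cphi.1].
by rewrite -(gap_sub_cst (phi x0) cphi.1); apply/H_max/unit_potential_sub.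
Qed.

End DualPotentials.

Lemma cost_ge0 (R : realType) (T : Type) (Rel : set (T * T)) x y :
  0 <= cost Rel x y :> R.
Proof. by rewrite /cost subr_ge0 indicE lern1 leq_b1. Qed.

Lemma cost_le1 (R : realType) (T : Type) (Rel : set (T * T)) x y :
  cost Rel x y <= 1 :> R.
Proof. by rewrite /cost lerBlDr lerDl. Qed.

Theorem mainTheorem6 (R : realType) (T : completePseudoMetricType R)
  (HT : polish_space T) (Rel : set (T * T)) (HRel : borel_set Rel)
  (mu nu : probability (borel_of (@open T)) R) :
  exists phi0 : borel_of (@open T) -> R,
    [/\ bounded_borel phi0,
        (forall x y, phi0 x - phi0 y <= cost Rel x y) &
        forall phi : borel_of (@open T) -> R,
          bounded_borel phi ->
          (forall x y, phi x - phi y <= cost Rel x y) ->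
          (dual_obj mu nu phi <= dual_obj mu nu phi0)%E].
Proof.
have [phi0 [[bphi0 cphi0] opt]] :=
  dual_sup_attained mu nu (@cost_ge0 R _ Rel) (@cost_le1 R _ Rel) point.
by exists phi0; split => // phi bphi cphi; apply: opt.
Qed.
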